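(* Let $\lambda$ be an infinite cardinal with $\lambda^{\aleph_0}=\lambda$, and let $C=\{\delta_\xi:\xi<\lambda^+\}\subseteq\lambda^+$ be a closed unbounded set enumerated in increasing order. Then there is a function $K:[\lambda^+]^{\aleph_0}\to\lambda$ such that whenever $A,B\in[\lambda^+]^{\aleph_0}$ satisfy $K(A)=K(B)$ and there is $\xi<\lambda^+$ with $A\cap[\delta_\xi,\delta_{\xi+1})\neq\emptyset$ and $B\cap[\delta_\xi,\delta_{\xi+1})\neq\emptyset$, then $A\cap\delta_{\xi+1}=B\cap\delta_{\xi+1}$. (Consequently, if $K(A)=K(B)$ then $A\cap B$ is an initial segment of both $A$ and $B$.)
   Context: $[\lambda^+]^{\aleph_0}$ denotes the set of countably infinite subsets of $\lambda^+$. Ordinals are identified with the sets of smaller ordinals, so $A\cap\delta$ is the set of elements of $A$ below $\delta$. *)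

(* Ordinals / cardinals are modelled abstractly:
   - a type [L] of cardinality lambda;
   - a type [P] with a strict well-order [lt] of order type lambda^+
     (characterised as: well-order, not injectable into L, every proper
      initial segment injectable into L). *)
From Stdlib Require Import Relations Wellfounded.

Definition injective {X Y : Type} (f : X -> Y) : Prop :=
  forall x y, f x = f y -> x = y.

Definition infinite_type (X : Type) : Prop :=
  exists f : nat -> X, injective f.

(* |X|^{aleph_0} = |X| (the inequality |X| <= |X|^{aleph_0} is trivial) *)
Definition pow_aleph0_eq (X : Type) : Prop :=
  exists f : (nat -> X) -> X, injective f.

Definition strict_well_order {P : Type} (lt : P -> P -> Prop) : Prop :=
  (forall x y z, lt x y -> lt y z -> lt x z) /\
  (forall x y, lt x y \/ x = y \/ lt y x) /\
  well_founded lt.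

Definition le {P : Type} (lt : P -> P -> Prop) (x y : P) : Prop :=
  lt x y \/ x = y.

Definition is_successor_cardinal_of (L P : Type) (lt : P -> P -> Prop) : Prop :=
  strict_well_order lt /\
  (forall x : P, exists f : {y : P | lt y x} -> L, injective f) /\
  ~ (exists f : P -> L, injective f).

Definition is_succ {P : Type} (lt : P -> P -> Prop) (xi eta : P) : Prop :=
  lt xi eta /\ forall z, lt xi z -> le lt eta z.

Definition unbounded {P : Type} (lt : P -> P -> Prop) (C : P -> Prop) : Prop :=
  forall x, exists c, C c /\ le lt x c.

Definition closed {P : Type} (lt : P -> P -> Prop) (C : P -> Prop) : Prop :=
  forall x,
    (exists c, C c /\ lt c x) ->
    (forall y, lt y x -> exists c, C c /\ lt y c /\ lt c x) ->
    C x.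

Definition club {P : Type} (lt : P -> P -> Prop) (C : P -> Prop) : Prop :=
  closed lt C /\ unbounded lt C.

Definition increasing_enumeration {P : Type} (lt : P -> P -> Prop)
    (C : P -> Prop) (delta : P -> P) : Prop :=
  (forall x y, lt x y -> lt (delta x) (delta y)) /\
  (forall c, C c <-> exists xi, delta xi = c).

Definition countably_infinite {P : Type} (A : P -> Prop) : Prop :=
  exists f : nat -> P, injective f /\ (forall x, A x <-> exists n, f n = x).

From Stdlib Require Import ClassicalEpsilon.

(* Fix injections [g γ : γ -> λ] for [γ < λ^+] and an injection of [λ^ω] into
   [λ], and enumerate each countable [A] as [f 0, f 1, ...].  The entry of
   [K(A)] at [n], for [f n] in the block [[δ_ξ, δ_{ξ+1})], records the trace
   [m ↦ g δ_{ξ+1} (f m)] of [A ∩ δ_{ξ+1}].  If [K(A) = K(B)] and [A], [B] meet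
   that block at indices [i] and [j], comparing the entries at [j] gives equal
   traces, provided [A] and [B] have their [j]-th elements in the same block.
   To force this, the entry also records, for every [p], a point of [λ]
   separating the block index [ξ] from the block index of [f p], read off an
   injection of [λ^+] into the subsets of [λ] (codes of well-orders).  Taking
   [p = i], the block index of the [j]-th element of [A] cannot be separated
   from [ξ], hence equals it. *)

Section WellFounded.

Context {P : Type} (lt : P -> P -> Prop).
Hypothesis lt_wf : well_founded lt.

Lemma wf_irrefl x : ~ lt x x.
Proof.
  induction x as [x IH] using (well_founded_ind lt_wf).
  intros Hxx. exact (IH x Hxx Hxx).
Qed.

Lemma wf_strict_mono_not_below (M : P -> P -> Prop)
    (M_down : forall y u z, M y u -> lt z y -> exists w, M z w)
    (M_mono : forall y z u v, M y u -> M z v -> lt y z -> lt u v) :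
  forall y u, M y u -> ~ lt u y.
Proof.
  intros y. induction y as [y IH] using (well_founded_ind lt_wf).
  intros u Myu Huy.
  destruct (M_down y u u Myu Huy) as [v Muv].
  exact (IH u Huy v Muv (M_mono u y v u Muv Myu Huy)).
Qed.

End WellFounded.

Section SequenceCoding.

Context {L : Type} (seqL : (nat -> L) -> L).
Hypothesis seqL_inj : injective seqL.
Variables l0 l1 : L.
Hypothesis l01 : l0 <> l1.

Definition pairL (a b : L) : L := seqL (fun n => match n with 0 => a | S _ => b end).

Lemma pairL_inj a b c d : pairL a b = pairL c d -> a = c /\ b = d.
Proof.
  intros H. apply seqL_inj in H.
  exact (conj (f_equal (fun s => s 0) H) (f_equal (fun s => s 1) H)).
Qed.

Definition optL (o : option L) : L :=
  match o with None => seqL (fun _ => l0) | Some x => pairL l1 x end.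

Lemma optL_inj : injective optL.
Proof.
  intros [x|] [y|] H; simpl in H.
  - apply pairL_inj in H. destruct H as [_ ->]. reflexivity.
  - apply seqL_inj, (f_equal (fun s => s 0)) in H. contradiction (l01 (eq_sym H)).
  - apply seqL_inj, (f_equal (fun s => s 0)) in H. contradiction (l01 H).
  - reflexivity.
Qed.

Definition propL (Q : Prop) : L := if excluded_middle_informative Q then l1 else l0.

Lemma propL_iff Q Q' : propL Q = propL Q' -> (Q <-> Q').
Proof.
  unfold propL.
  destruct (excluded_middle_informative Q), (excluded_middle_informative Q');
    intros H; try tauto; exfalso; congruence.
Qed.

End SequenceCoding.

Section WellOrderCodes.

Context {P L : Type} (lt : P -> P -> Prop).
Hypotheses (lt_trans : forall x y z, lt x y -> lt y z -> lt x z)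
  (lt_total : forall x y, lt x y \/ x = y \/ lt y x)
  (lt_wf : well_founded lt).
Variable g : forall x : P, {y | lt y x} -> L.
Hypothesis g_inj : forall x, injective (g x).
Variable pair : L -> L -> L.
Hypothesis pair_inj : forall a b c d, pair a b = pair c d -> a = c /\ b = d.

Definition wo_code (x : P) (k : L) : Prop :=
  exists y z : {y | lt y x},
    le lt (proj1_sig y) (proj1_sig z) /\ k = pair (g x y) (g x z).

Lemma wo_code_lt x x' : lt x x' -> exists k, ~ (wo_code x k <-> wo_code x' k).
Proof.
  intros Hxx'. apply NNPP. intros Hsame.
  pose proof (not_ex_not_all _ _ Hsame) as Hcode.
  (* [M] is the order embedding of [x'] into [x] induced by equal codes. *)
  pose (M := fun y u => exists (hy : lt y x') (hu : lt u x),
               g x (exist _ u hu) = g x' (exist _ y hy)).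
  assert (M_dom : forall y (hy : lt y x'), exists u, M y u).
  { intros y hy.
    destruct (proj2 (Hcode (pair (g x' (exist _ y hy)) (g x' (exist _ y hy)))))
      as [[u hu] [z [_ Hk]]].
    - exists (exist _ y hy), (exist _ y hy). split; [right|]; reflexivity.
    - apply pair_inj in Hk. exists u, hy, hu. symmetry. apply Hk. }
  assert (M_mono : forall y z u v, M y u -> M z v -> lt y z -> lt u v).
  { intros y z u v [hy [hu Hu]] [hz [hv Hv]] Hyz.
    destruct (proj2 (Hcode (pair (g x' (exist _ y hy)) (g x' (exist _ z hz)))))
      as [[u' hu'] [[v' hv'] [Hle Hk]]].
    - exists (exist _ y hy), (exist _ z hz). split; [left; exact Hyz | reflexivity].
    - apply pair_inj in Hk. destruct Hk as [Hu' Hv'].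
      rewrite <- Hu in Hu'. rewrite <- Hv in Hv'.
      apply g_inj, (f_equal (@proj1_sig _ _)) in Hu'.
      apply g_inj, (f_equal (@proj1_sig _ _)) in Hv'.
      simpl in Hu', Hv', Hle. subst u' v'.
      destruct Hle as [Huv | <-]; [exact Huv |].
      replace hv with hu in Hv by apply proof_irrelevance.
      rewrite Hu in Hv. apply g_inj, (f_equal (@proj1_sig _ _)) in Hv.
      simpl in Hv. subst z. contradiction (wf_irrefl lt lt_wf y). }
  assert (M_down : forall y u z, M y u -> lt z y -> exists w, M z w).
  { intros y u z [hy _] Hzy. exact (M_dom z (lt_trans _ _ _ Hzy hy)). }
  destruct (M_dom x Hxx') as [u Mxu].
  destruct Mxu as [hx [hu Hu]].
  apply (wf_strict_mono_not_below lt lt_wf M M_down M_mono x u); [|exact hu].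
  exists hx, hu. exact Hu.
Qed.

Lemma wo_code_separates x y : x <> y -> exists k, ~ (wo_code x k <-> wo_code y k).
Proof.
  intros Hxy. destruct (lt_total x y) as [H | [H | H]].
  - exact (wo_code_lt x y H).
  - contradiction.
  - destruct (wo_code_lt y x H) as [k Hk]. exists k. intros Hiff. apply Hk. tauto.
Qed.

End WellOrderCodes.

Section Blocks.

Context {P : Type} (lt : P -> P -> Prop) (delta : P -> P).
Hypotheses (lt_trans : forall x y z, lt x y -> lt y z -> lt x z)
  (lt_total : forall x y, lt x y \/ x = y \/ lt y x)
  (lt_wf : well_founded lt)
  (delta_mono : forall x y, lt x y -> lt (delta x) (delta y)).

Definition in_block (xi eta a : P) : Prop :=
  is_succ lt xi eta /\ le lt (delta xi) a /\ lt a (delta eta).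

Lemma is_succ_unique xi eta eta' : is_succ lt xi eta -> is_succ lt xi eta' -> eta = eta'.
Proof.
  intros [Heta Heta_min] [Heta' Heta'_min].
  destruct (Heta_min eta' Heta') as [H | H]; [| exact H].
  destruct (Heta'_min eta Heta) as [H' | H']; [| symmetry; exact H'].
  contradiction (wf_irrefl lt lt_wf eta (lt_trans _ _ _ H H')).
Qed.

Lemma in_block_not_lt xi eta u v a : in_block xi eta a -> in_block u v a -> ~ lt xi u.
Proof.
  intros [[_ Heta_min] [_ Ha]] [_ [Hua _]] Hxu.
  assert (Hdelta : le lt (delta eta) (delta u)).
  { destruct (Heta_min u Hxu) as [H | <-]; [left; exact (delta_mono _ _ H) | right; reflexivity]. }
  assert (Hau : lt a (delta u)).
  { destruct Hdelta as [H | <-]; [exact (lt_trans _ _ _ Ha H) | exact Ha]. }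
  apply (wf_irrefl lt lt_wf a).
  destruct Hua as [H | E]; [exact (lt_trans _ _ _ Hau H) | rewrite E in Hau; exact Hau].
Qed.

Lemma in_block_unique xi eta u v a :
  in_block xi eta a -> in_block u v a -> xi = u /\ eta = v.
Proof.
  intros Ha Ha'.
  assert (xi = u) as <-.
  { destruct (lt_total xi u) as [H | [H | H]]; [| exact H |]; exfalso.
    - exact (in_block_not_lt _ _ _ _ _ Ha Ha' H).
    - exact (in_block_not_lt _ _ _ _ _ Ha' Ha H). }
  split; [reflexivity|]. exact (is_succ_unique _ _ _ (proj1 Ha) (proj1 Ha')).
Qed.

Definition block (a : P) : option (P * P) :=
  match excluded_middle_informative (exists p, in_block (fst p) (snd p) a) with
  | left H => Some (proj1_sig (constructive_indefinite_description _ H))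
  | right _ => None
  end.

Lemma block_in_block a xi eta : block a = Some (xi, eta) -> in_block xi eta a.
Proof.
  unfold block. destruct (excluded_middle_informative _) as [H | H]; [| discriminate].
  intros E. injection E as E.
  exact (eq_rect _ (fun p => in_block (fst p) (snd p) a)
           (proj2_sig (constructive_indefinite_description _ H)) _ E).
Qed.

Lemma in_block_block a xi eta : in_block xi eta a -> block a = Some (xi, eta).
Proof.
  intros Ha. destruct (block a) as [[u v] |] eqn:E.
  - destruct (in_block_unique _ _ _ _ _ Ha (block_in_block a u v E)) as [Hu Hv].
    subst. reflexivity.
  - unfold block in E. destruct (excluded_middle_informative _) as [H' | H]; [discriminate |].
    contradiction H. exists (xi, eta). exact Ha.
Qed.

End Blocks.

Section BlockCode.

Context {L P : Type} (lt : P -> P -> Prop) (delta : P -> P).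
Hypotheses (lt_trans : forall x y z, lt x y -> lt y z -> lt x z)
  (lt_total : forall x y, lt x y \/ x = y \/ lt y x)
  (lt_wf : well_founded lt)
  (delta_mono : forall x y, lt x y -> lt (delta x) (delta y)).
Variable g : forall x : P, {y | lt y x} -> L.
Hypothesis g_inj : forall x, injective (g x).
Variable seqL : (nat -> L) -> L.
Hypothesis seqL_inj : injective seqL.
Variables l0 l1 : L.
Hypothesis l01 : l0 <> l1.
Variable nm : P -> L -> Prop.
Hypothesis nm_separates : forall x y, x <> y -> exists k, ~ (nm x k <-> nm y k).

Definition trace (gam a : P) : option L :=
  match excluded_middle_informative (lt a gam) with
  | left H => Some (g gam (exist _ a H))
  | right _ => None
  end.

Lemma trace_eq_below gam a b : trace gam a = trace gam b -> lt a gam -> a = b.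
Proof.
  unfold trace. intros E Ha.
  destruct (excluded_middle_informative (lt a gam)) as [Ha' | Ha']; [| contradiction].
  destruct (excluded_middle_informative (lt b gam)) as [Hb' | Hb']; [| discriminate].
  injection E as E. apply g_inj, (f_equal (@proj1_sig _ _)) in E. exact E.
Qed.

Definition separator (x y : P) : L :=
  epsilon (inhabits l0) (fun k => ~ (nm x k <-> nm y k)).

Lemma separator_spec x y : x <> y -> ~ (nm x (separator x y) <-> nm y (separator x y)).
Proof. intros Hxy. exact (epsilon_spec _ _ (nm_separates x y Hxy)). Qed.

Definition block_separator (xi a : P) : option L :=
  match block lt delta a with
  | None => None
  | Some (zeta, _) =>
      Some (pairL seqL (separator xi zeta) (propL l0 l1 (nm xi (separator xi zeta))))
  end.

Definition block_entry (f : nat -> P) (a : P) : L :=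
  optL seqL l0 l1
    (match block lt delta a with
     | None => None
     | Some (xi, eta) =>
         Some (pairL seqL (seqL (fun m => optL seqL l0 l1 (trace (delta eta) (f m))))
                          (seqL (fun p => optL seqL l0 l1 (block_separator xi (f p)))))
     end).

Definition block_code (f : nat -> P) : L := seqL (fun n => block_entry f (f n)).

Lemma block_entry_eq fa fb a b xi eta :
  block_entry fa a = block_entry fb b -> in_block lt delta xi eta b ->
  exists u v, block lt delta a = Some (u, v) /\
    (forall m, trace (delta v) (fa m) = trace (delta eta) (fb m)) /\
    (forall p, block_separator u (fa p) = block_separator xi (fb p)).
Proof.
  intros E Hb. unfold block_entry in E.
  rewrite (in_block_block lt delta lt_trans lt_total lt_wf delta_mono b xi eta Hb) in E.
  apply (optL_inj seqL seqL_inj l0 l1 l01) in E.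
  destruct (block lt delta a) as [[u v] |]; [| discriminate].
  injection E as E. apply (pairL_inj seqL seqL_inj) in E. destruct E as [Etr Esep].
  apply seqL_inj in Etr, Esep.
  exists u, v. split; [reflexivity | split].
  - intros m. apply (optL_inj seqL seqL_inj l0 l1 l01). exact (f_equal (fun s => s m) Etr).
  - intros p. apply (optL_inj seqL seqL_inj l0 l1 l01). exact (f_equal (fun s => s p) Esep).
Qed.

Lemma block_separator_eq u xi eta a b :
  block_separator u a = block_separator xi b -> in_block lt delta xi eta a -> u = xi.
Proof.
  intros E Ha. unfold block_separator in E.
  rewrite (in_block_block lt delta lt_trans lt_total lt_wf delta_mono a xi eta Ha) in E.
  destruct (block lt delta b) as [[zeta _] |]; [| discriminate].
  injection E as E. apply (pairL_inj seqL seqL_inj) in E. destruct E as [Ek Ebit].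
  rewrite <- Ek in Ebit. apply (propL_iff l0 l1 l01) in Ebit.
  apply NNPP. intros Hu. exact (separator_spec u xi Hu Ebit).
Qed.

Lemma block_code_eq_traces fa fb xi eta i j :
  block_code fa = block_code fb ->
  in_block lt delta xi eta (fa i) -> in_block lt delta xi eta (fb j) ->
  forall m, trace (delta eta) (fa m) = trace (delta eta) (fb m).
Proof.
  intros E Hai Hbj.
  apply seqL_inj, (f_equal (fun s => s j)) in E.
  destruct (block_entry_eq _ _ _ _ _ _ E Hbj) as [u [v [Haj [Etr Esep]]]].
  assert (u = xi) as ->. { exact (block_separator_eq _ _ _ _ _ (Esep i) Hai). }
  apply block_in_block in Haj.
  rewrite (is_succ_unique lt lt_trans lt_wf _ _ _ (proj1 Haj) (proj1 Hbj)) in Etr.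
  exact Etr.
Qed.

Lemma block_code_eq_agree_below fa fb xi eta i j :
  block_code fa = block_code fb ->
  in_block lt delta xi eta (fa i) -> in_block lt delta xi eta (fb j) ->
  forall x, lt x (delta eta) -> ((exists m, fa m = x) <-> (exists m, fb m = x)).
Proof.
  intros E Hai Hbj x Hx.
  pose proof (block_code_eq_traces _ _ _ _ _ _ E Hai Hbj) as Etr.
  split; intros [m <-]; exists m; symmetry.
  - exact (trace_eq_below _ _ _ (Etr m) Hx).
  - exact (trace_eq_below _ _ _ (eq_sym (Etr m)) Hx).
Qed.

End BlockCode.

Lemma code_by_enumeration {P L : Type} (code : (nat -> P) -> L) (l : L) :
  exists K : (P -> Prop) -> L, forall A, countably_infinite A ->
    exists f, (forall x, A x <-> exists n, f n = x) /\ K A = code f.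
Proof.
  exists (fun A => match excluded_middle_informative (countably_infinite A) with
           | left H => code (proj1_sig (constructive_indefinite_description _ H))
           | right _ => l
           end).
  intros A HA. destruct (excluded_middle_informative _) as [H | H]; [| contradiction].
  exists (proj1_sig (constructive_indefinite_description _ H)). split; [| reflexivity].
  exact (proj2 (proj2_sig (constructive_indefinite_description _ H))).
Qed.

Theorem lemma2 (L P : Type) (lt : P -> P -> Prop)
  (HLinf : infinite_type L) (HLpow : pow_aleph0_eq L)
  (HP : is_successor_cardinal_of L P lt)
  (C : P -> Prop) (HC : club lt C)
  (delta : P -> P) (Hdelta : increasing_enumeration lt C delta) :
  exists K : (P -> Prop) -> L,
    forall A B : P -> Prop,
      countably_infinite A -> countably_infinite B ->
      K A = K B ->
      forall xi xi1 : P, is_succ lt xi xi1 ->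
        (exists a, A a /\ le lt (delta xi) a /\ lt a (delta xi1)) ->
        (exists b, B b /\ le lt (delta xi) b /\ lt b (delta xi1)) ->
        forall x, lt x (delta xi1) -> (A x <-> B x).
Proof.
  destruct HP as [[lt_trans [lt_total lt_wf]] [Hsegments _]].
  destruct HLpow as [seqL seqL_inj], HLinf as [e e_inj].
  assert (l01 : e 0 <> e 1) by (intros H; discriminate (e_inj _ _ H)).
  pose (g := fun x => proj1_sig (constructive_indefinite_description _ (Hsegments x))).
  assert (g_inj : forall x, injective (g x))
    by (intros x; exact (proj2_sig (constructive_indefinite_description _ (Hsegments x)))).
  pose proof (wo_code_separates lt lt_trans lt_total lt_wf g g_inj (pairL seqL)
                (pairL_inj seqL seqL_inj)) as nm_separates.
  destruct (code_by_enumeration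
              (block_code lt delta g seqL (e 0) (e 1) (wo_code lt g (pairL seqL))) (e 0))
    as [K HK].
  exists K.
  intros A B HA HB HAB xi xi1 Hsucc [a [Aa Ha]] [b [Bb Hb]] x Hx.
  destruct (HK A HA) as [fa [Hfa HKA]], (HK B HB) as [fb [Hfb HKB]].
  rewrite HKA, HKB in HAB.
  destruct (proj1 (Hfa a) Aa) as [i Hi], (proj1 (Hfb b) Bb) as [j Hj]. subst a b.
  rewrite Hfa, Hfb.
  exact (block_code_eq_agree_below lt delta lt_trans lt_total lt_wf (proj1 Hdelta)
           g g_inj seqL seqL_inj _ _ l01 _ nm_separates fa fb xi xi1 i j HAB
           (conj Hsucc Ha) (conj Hsucc Hb) x Hx).
Qed.
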